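(* Let $G=(K\cup I,E)$ be a split graph and let $L\subseteq K$, $J\subseteq I$ (possibly empty). Then $L\cup J$ is free in the vertex shelling antimatroid of $G$ if and only if either there is no edge between $L$ and $J$, or there exists a vertex $h\in J$ such that $L\subseteq N(h)$ and $N(J\setminus\{h\})\subseteq N(h)\setminus L$.
   Context: A split graph $G=(K\cup I,E)$ is a finite simple graph whose vertex set $V=K\cup I$ comes with a fixed partition into a clique $K$ and an independent set $I$. For $X\subseteq V$, $N(X)$ is the set of vertices of $V\setminus X$ adjacent to some vertex of $X$, and $N(v)=N(\{v\})$. A vertex is simplicial if its neighbours induce a clique. The vertex shelling antimatroid of $G$ is $(V,\mathcal{F})$ where $F\subseteq V$ is feasible iff there is an ordering $f_1,\dots,f_{|F|}$ of $F$ such that each $f_j$ is simplicial in $G$ minus $\{f_1,\dots,f_{j-1}\}$ (the empty set is feasible). The trace of $\mathcal{F}$ on $X\subseteq V$ is $\{F\cap X:F\in\mathcal{F}\}$, and $X$ is free if its trace equals $2^X$. *)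

From mathcomp Require Import all_boot.
Set Implicit Arguments. Unset Strict Implicit. Unset Printing Implicit Defensive.

Section SplitGraphs.
Variable T : finType.
Variable e : rel T.

Definition simple_graph : Prop := symmetric e /\ irreflexive e.

(* split graph with clique K and independent set I := ~: K *)
Definition split_graph (K : {set T}) : Prop :=
  simple_graph /\
  (forall x y, x \in K -> y \in K -> x != y -> e x y) /\
  (forall x y, x \notin K -> y \notin K -> ~~ e x y).

Definition nbhd (X : {set T}) : {set T} :=
  [set v | (v \notin X) && [exists x in X, e x v]].

Definition simplicial_in (X : {set T}) (v : T) : bool :=
  (v \notin X) &&
  [forall a, forall b,
     [&& a \notin X, b \notin X, a != b, e v a & e v b] ==> e a b].

Fixpoint shelling (X : {set T}) (s : seq T) : bool :=
  match s with
  | [::] => true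
  | v :: s' => simplicial_in X v && shelling (v |: X) s'
  end.

Definition feasible (F : {set T}) : Prop :=
  exists s : seq T, shelling set0 s /\ [set x in s] = F.

(* X is free: its trace equals the full power set 2^X *)
Definition free_set (X : {set T}) : Prop :=
  forall Y : {set T}, Y \subset X -> exists F, feasible F /\ F :&: X = Y.

End SplitGraphs.

From mathcomp Require Import all_boot.

(* Independent vertices are always simplicial, and a clique vertex [k] is
   simplicial in [G - X] as soon as its independent neighbours outside [X] are
   a single vertex adjacent to every clique vertex outside [X].
   If [L :|: J] is free, realise the trace [[set l]] for [l \in L]: when [l] is
   removed all of [J] and [L :\ l] is still present, so [l] has at most one
   neighbour in [J], and if [l] sees [j \in J] then [j] sees all of [L].  A
   clique neighbour [k] of [x \in J :\ j] is thus not in [L]; if [k] is removed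
   before [l] it sees [l] and [x], giving [l] a second neighbour in [J], so [l]
   is removed first, while it sees [j] and [k], and [k] is adjacent to [j].
   Conversely a trace [Y] is realised by removing first the independent
   vertices outside [J :\: Y], then the clique vertices outside [N(h)] (none
   when there is no edge between [L] and [J]), and finally [Y :&: L]. *)

Set Implicit Arguments.
Unset Strict Implicit.
Unset Printing Implicit Defensive.

Section Shelling.
Variables (T : finType) (e : rel T).

Lemma simplicialP (X : {set T}) (v : T) :
  reflect (v \notin X /\
           forall a b, a \notin X -> b \notin X -> a != b -> e v a -> e v b -> e a b)
          (simplicial_in e X v).
Proof.
apply: (iffP andP) => -[vX simp]; split=> //.
  move=> a b aX bX ab va vb.
  by apply: (implyP (forallP (forallP simp a) b)); rewrite aX bX ab va vb.
apply/forallP=> a; apply/forallP=> b; apply/implyP=> /and5P[]; exact: simp.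
Qed.

Lemma nbhdP (X : {set T}) (v : T) :
  reflect (v \notin X /\ exists2 x, x \in X & e x v) (v \in nbhd e X).
Proof.
rewrite inE; apply: (iffP andP) => -[vX adj]; split=> //.
  by have /exists_inP := adj.
exact/exists_inP.
Qed.

Lemma in_nbhd1 (h v : T) : (v \in nbhd e [set h]) = (v != h) && e h v.
Proof.
apply/nbhdP/andP; rewrite in_set1.
  by case=> vh [x /set1P ->].
by case=> vh hv; split=> //; exists h; rewrite ?set11.
Qed.

Lemma shelling_cat (X : {set T}) (s1 s2 : seq T) :
  shelling e X (s1 ++ s2) =
  shelling e X s1 && shelling e (X :|: [set x in s1]) s2.
Proof.
elim: s1 X => [|v s1 IH] X /=.
  by congr shelling; apply/setP=> x; rewrite !inE orbF.
rewrite IH andbA; congr (_ && shelling _ _ _); apply/setP=> x.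
by rewrite !inE orbA [(x == v) || _]orbC.
Qed.

(* A vertex outside [s] has index [size s], so it is never removed before
   anything. *)
Definition removed_before (s : seq T) (v : T) : {set T} :=
  [set x | index x s < index v s].

Lemma removed_before_mem (s : seq T) (v x : T) :
  x \in removed_before s v -> x \in s.
Proof.
rewrite inE; apply: contraLR => /memNindex ->.
by rewrite -leqNgt index_size.
Qed.

Lemma notin_removed_before (s : seq T) (v x : T) :
  x \notin s -> x \notin removed_before s v.
Proof. by apply: contra; apply: removed_before_mem. Qed.

Lemma removed_before_asym (s : seq T) (u v : T) :
  u \in removed_before s v -> v \notin removed_before s u.
Proof. by rewrite !inE -leqNgt; apply: ltnW. Qed.

Lemma shelling_simplicial (s : seq T) (v : T) :
  shelling e set0 s -> v \in s -> simplicial_in e (removed_before s v) v.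
Proof.
rewrite -[removed_before s v]set0U; elim: s set0 => [|w s IH] X //= /andP[wX sh].
have [-> _|vw] := eqVneq v w.
  by congr simplicial_in: wX; apply/setP=> x; rewrite !inE /= eqxx ltn0 orbF.
rewrite inE (negbTE vw) /= => vs.
congr simplicial_in: (IH _ sh vs); apply/setP=> x.
rewrite !inE /= [w == v]eq_sym (negbTE vw) ltnS.
by rewrite [x == w]eq_sym; case: (w == x); rewrite /= ?orbT.
Qed.

Definition simplicial_from (X : {set T}) (v : T) : Prop :=
  forall Y : {set T}, X \subset Y -> v \notin Y -> simplicial_in e Y v.

Lemma simplicial_fromS (X X' : {set T}) (v : T) :
  X \subset X' -> simplicial_from X v -> simplicial_from X' v.
Proof. by move=> sXX' simp Y sX'Y; apply: simp (subset_trans sXX' sX'Y). Qed.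

Lemma shelling_simplicial_from (X : {set T}) (s : seq T) :
  uniq s -> {in s, forall v, v \notin X} -> {in s, forall v, simplicial_from X v} ->
  shelling e X s.
Proof.
elim: s X => [|v s IH] X //= /andP[vs us] sX simp.
rewrite simp ?sX ?mem_head ?subxx //=.
have ws_cons w : w \in s -> w \in v :: s by rewrite inE => ->; rewrite orbT.
apply: IH => // w ws; last exact: simplicial_fromS (subsetUr _ _) (simp _ (ws_cons _ ws)).
rewrite !inE negb_or sX ?ws_cons // andbT.
by apply: contraNneq vs => <-.
Qed.

Lemma feasible0 : feasible e set0.
Proof. by exists [::]; split=> //; apply/setP=> x; rewrite !inE. Qed.

Lemma feasibleU (F A : {set T}) :
  feasible e F -> {in A, forall v, simplicial_from F v} -> feasible e (F :|: A).
Proof.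
move=> [s [sh <-]] simp; exists (s ++ enum (A :\: [set x in s])); split.
  rewrite shelling_cat sh set0U /=; apply: shelling_simplicial_from.
  - exact: enum_uniq.
  - by move=> v; rewrite mem_enum => /setDP[].
  - by move=> v; rewrite mem_enum => /setDP[vA _]; exact: simp.
by apply/setP=> x; rewrite !inE mem_cat mem_enum !inE; case: (x \in s).
Qed.

Lemma free_set1_shelling (X : {set T}) (x : T) :
  free_set e X -> x \in X ->
  exists2 s, shelling e set0 s & {in X, forall y, (y \in s) = (y == x)}.
Proof.
move=> fr xX; have [|F [[s [sh sF]] FX]] := fr [set x]; first by rewrite sub1set.
exists s => // y yX; apply/idP/eqP => [ys|->].
  by apply/set1P; rewrite -FX -sF !inE ys.
have /setIP[xF _] : x \in F :&: X by rewrite FX set11.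
by rewrite -sF inE in xF.
Qed.

End Shelling.

Section SplitGraph.
Variables (T : finType) (e : rel T) (K : {set T}).
Hypothesis sg : split_graph e K.

Let e_sym : symmetric e := sg.1.1.
Let e_irr : irreflexive e := sg.1.2.
Let clique {x y} : x \in K -> y \in K -> x != y -> e x y := sg.2.1 x y.
Let indep {x y} : x \notin K -> y \notin K -> ~~ e x y := sg.2.2 x y.

Lemma clique_indep_neq (x y : T) : x \in K -> y \notin K -> x != y.
Proof. by move=> xK; apply: contraNneq => <-. Qed.

Lemma indep_simplicial (X : {set T}) (v : T) :
  v \notin K -> v \notin X -> simplicial_in e X v.
Proof.
move=> vK vX; apply/simplicialP; split=> // a b _ _ ab va vb.
have inK x : e v x -> x \in K by apply: contraLR => /(indep vK).
by apply: clique; rewrite ?inK.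
Qed.

Lemma clique_simplicial_hub (X : {set T}) (k h : T) :
  k \in K -> k \notin X ->
  (forall i, i \notin K -> i \notin X -> e k i -> i = h) ->
  (forall k', k' \in K -> k' \notin X -> k' != k -> e h k') ->
  simplicial_in e X k.
Proof.
move=> kK kX hub hadj; apply/simplicialP; split=> // a b aX bX ab ka kb.
have ak : a != k by apply: contraTneq ka => ->; rewrite e_irr.
have bk : b != k by apply: contraTneq kb => ->; rewrite e_irr.
have [aK|aK] := boolP (a \in K); have [bK|bK] := boolP (b \in K).
- exact: clique.
- by rewrite (hub b) // e_sym hadj.
- by rewrite (hub a) // hadj.
- by move: ab; rewrite (hub a) // (hub b) ?eqxx.
Qed.

Lemma clique_simplicial (X : {set T}) (k : T) :
  k \in K -> k \notin X -> (forall i, i \notin K -> i \notin X -> ~~ e k i) ->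
  simplicial_in e X k.
Proof.
move=> kK kX noI; apply: (clique_simplicial_hub (h := k)) => // [i iK iX|k' k'K _ k'k].
  by move/negP: (noI i iK iX).
by rewrite clique // eq_sym.
Qed.

Variables L J : {set T}.
Hypotheses (sLK : L \subset K) (sJI : J \subset ~: K).

Let inK x : x \in L -> x \in K := subsetP sLK x.
Let notinK x : x \in J -> x \notin K.
Proof. by move/(subsetP sJI); rewrite inE. Qed.

Section Necessity.
Hypothesis fr : free_set e (L :|: J).

Lemma free_removal (l : T) : l \in L ->
  exists s, [/\ shelling e set0 s, l \in s, {in J, forall y, y \notin s}
              & {in L, forall y, y != l -> y \notin s}].
Proof.
move=> lL; have lLJ : l \in L :|: J by rewrite inE lL.
have [s sh sLJ] := free_set1_shelling fr lLJ.
have absent y : y \in L :|: J -> y != l -> y \notin s by move=> yLJ; rewrite sLJ.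
exists s; split=> // [|y yJ|y yL]; first by rewrite sLJ.
  apply: absent; first by rewrite inE yJ orbT.
  by rewrite eq_sym (clique_indep_neq (inK lL) (notinK yJ)).
by apply: absent; rewrite inE yL.
Qed.

Lemma free_indep_nbr_unique (l j j' : T) :
  l \in L -> j \in J -> j' \in J -> e l j -> e l j' -> j = j'.
Proof.
move=> lL jJ j'J lj lj'; have [s [sh ls Js _]] := free_removal lL.
have /simplicialP[_ adj] := shelling_simplicial sh ls.
move: (indep (notinK jJ) (notinK j'J)); apply: contraNeq => jj'.
by apply: adj jj' lj lj'; apply: notin_removed_before; [apply: Js jJ | apply: Js j'J].
Qed.

Lemma free_indep_nbr_adjL (l j l' : T) :
  l \in L -> j \in J -> e l j -> l' \in L -> e j l'.
Proof.
move=> lL jJ lj l'L; have [->|l'l] := eqVneq l' l; first by rewrite e_sym.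
have [s [sh ls Js Ls]] := free_removal lL.
have /simplicialP[_ adj] := shelling_simplicial sh ls.
apply: adj lj (clique (inK lL) (inK l'L) _); rewrite 1?eq_sym //.
- exact/notin_removed_before/Js.
- exact/notin_removed_before/Ls.
- exact: clique_indep_neq (inK l'L) (notinK jJ).
Qed.

Lemma free_nbhd_other_indep (l j : T) : l \in L -> j \in J -> e l j ->
  nbhd e (J :\ j) \subset nbhd e [set j] :\: L.
Proof.
move=> lL jJ lj; apply/subsetP=> k /nbhdP[_ [x /setD1P[xj xJ] xk]].
have kK : k \in K by apply: contraLR xk => /(indep (notinK xJ)).
have kL : k \notin L.
  apply: contra xj => kL; apply/eqP/(free_indep_nbr_unique kL xJ jJ); rewrite e_sym //.
  exact: free_indep_nbr_adjL lj kL.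
have kl : k != l by apply: contraNneq kL => ->.
rewrite inE kL in_nbhd1 (clique_indep_neq kK (notinK jJ)) /=.
have [s [sh ls Js _]] := free_removal lL.
have present v y : y \in J -> y \notin removed_before s v.
  by move/Js/notin_removed_before.
have [k_first|k_present] := boolP (k \in removed_before s l).
  have /simplicialP[_ adj] := shelling_simplicial sh (removed_before_mem k_first).
  have lx : e l x.
    apply: adj (removed_before_asym k_first) (present _ x xJ) _ (clique kK (inK lL) kl) _.
      exact: clique_indep_neq (inK lL) (notinK xJ).
    by rewrite e_sym.
  by move: xj; rewrite (free_indep_nbr_unique lL xJ jJ lx lj) eqxx.
have /simplicialP[_ adj] := shelling_simplicial sh ls.
apply: adj (present _ j jJ) k_present _ lj (clique (inK lL) kK _); rewrite 1?eq_sym //.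
exact: clique_indep_neq kK (notinK jJ).
Qed.

Lemma free_set_no_edge_or_hub :
  (forall l j, l \in L -> j \in J -> ~~ e l j) \/
  (exists2 h, h \in J &
     L \subset nbhd e [set h] /\ nbhd e (J :\ h) \subset nbhd e [set h] :\: L).
Proof.
have [/existsP[l /andP[lL /exists_inP[j jJ lj]]]|no_edge] :=
  boolP [exists l, (l \in L) && [exists j in J, e l j]].
  right; exists j => //; split; last exact: free_nbhd_other_indep lj.
  apply/subsetP=> l' l'L; rewrite in_nbhd1 (free_indep_nbr_adjL lL jJ lj l'L) andbT.
  exact: clique_indep_neq (inK l'L) (notinK jJ).
left=> l j lL jJ; apply: contraNN no_edge => lj.
by apply/existsP; exists l; rewrite lL; apply/exists_inP; exists j.
Qed.

End Necessity.

Section Sufficiency.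
Variable Y : {set T}.
Hypothesis sY : Y \subset L :|: J.

(* The first block of the shelling: every independent vertex except those of
   [J :\: Y]. *)
Let indep_removed : {set T} := (~: K :\: J) :|: (Y :&: J).

Lemma present_indep_in_J (X : {set T}) (i : T) :
  indep_removed \subset X -> i \notin K -> i \notin X -> i \in J.
Proof.
move=> sX iK; apply: contraNT => iJ.
by apply: (subsetP sX); rewrite !inE iJ iK.
Qed.

Lemma trace_blocks (B : {set T}) : B \subset K -> [disjoint B & L] ->
  (indep_removed :|: B :|: (Y :&: L)) :&: (L :|: J) = Y.
Proof.
move=> sBK dBL; apply/setP=> x.
have xL : (x \in L) ==> (x \in K) by apply/implyP/subsetP.
have xJ : (x \in J) ==> (x \notin K) by apply/implyP/notinK.
have xY : (x \in Y) ==> (x \in L :|: J) by apply/implyP/subsetP.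
have xB : (x \in B) ==> (x \in K) && (x \notin L).
  by apply/implyP=> xB; rewrite (subsetP sBK) ?(disjointFr dBL).
move: xL xJ xY xB; rewrite !inE.
by case: (x \in L); case: (x \in J); case: (x \in K); case: (x \in Y); case: (x \in B).
Qed.

Lemma feasible_blocks (B : {set T}) :
  {in B, forall v, simplicial_from e indep_removed v} ->
  {in Y :&: L, forall v, simplicial_from e (indep_removed :|: B) v} ->
  feasible e (indep_removed :|: B :|: (Y :&: L)).
Proof.
move=> Bsimp Lsimp; apply: feasibleU Lsimp; apply: feasibleU Bsimp.
rewrite -[indep_removed]set0U; apply: feasibleU => [|v vI X _]; first exact: feasible0.
apply: indep_simplicial; move: vI; rewrite !inE => /orP[/andP[_ //] | /andP[_]].
exact: notinK.
Qed.

Lemma trace_of_no_edges : (forall l j, l \in L -> j \in J -> ~~ e l j) ->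
  exists F, feasible e F /\ F :&: (L :|: J) = Y.
Proof.
move=> no_edge; exists (indep_removed :|: set0 :|: (Y :&: L)); split.
  apply: feasible_blocks => [v|v /setIP[_ vL] X sX vX]; first by rewrite inE.
  apply: clique_simplicial (inK vL) vX _ => i iK iX; apply: no_edge vL _.
  by apply: present_indep_in_J iK iX; apply: subset_trans sX; apply: subsetUl.
by apply: trace_blocks; rewrite ?sub0set // -setI_eq0 set0I.
Qed.

Lemma trace_of_hub (h : T) :
  L \subset nbhd e [set h] -> nbhd e (J :\ h) \subset nbhd e [set h] :\: L ->
  exists F, feasible e F /\ F :&: (L :|: J) = Y.
Proof.
move=> sLh sJh.
have other_nbr v i : v \in K -> i \in J -> i != h -> e v i -> v \in nbhd e [set h] :\: L.
  move=> vK iJ ih vi; apply: (subsetP sJh); apply/nbhdP; split.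
    by apply: contraL vK; rewrite inE => /andP[_ /notinK].
  by exists i; rewrite ?inE ?ih // e_sym.
exists (indep_removed :|: (K :\: nbhd e [set h]) :|: (Y :&: L)); split.
  apply: feasible_blocks => [v /setDP[vK vN] X sX vX | v /setIP[_ vL] X sX vX].
    apply: (clique_simplicial vK vX) => i iK iX; apply: contra vN => vi.
    have iJ := present_indep_in_J sX iK iX.
    have [ih|ih] := eqVneq i h; last by case/setDP: (other_nbr v i vK iJ ih vi).
    by rewrite in_nbhd1 -ih e_sym vi andbT (clique_indep_neq vK iK).
  have sIX : indep_removed \subset X by apply: subset_trans sX; apply: subsetUl.
  apply: (clique_simplicial_hub (h := h) (inK vL) vX) => [i iK iX vi | k' k'K k'X _].
    have iJ := present_indep_in_J sIX iK iX.
    apply/eqP; apply: contraTT (vL) => ih.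
    by case/setDP: (other_nbr v i (inK vL) iJ ih vi).
  have : k' \notin K :\: nbhd e [set h].
    by apply: contra k'X => k'B; apply: (subsetP sX); rewrite inE k'B orbT.
  by rewrite inE k'K andbT negbK in_nbhd1 => /andP[].
apply: trace_blocks; first exact: subsetDl.
rewrite disjoint_sym disjoint_subset; apply/subsetP=> l lL.
by rewrite inE; apply: contraL (subsetP sLh l lL) => /setDP[_ ->].
Qed.

End Sufficiency.

End SplitGraph.

Unset Implicit Arguments.

Theorem mainTheorem15 (T : finType) (e : rel T) (K L J : {set T}) :
  split_graph e K ->
  L \subset K -> J \subset ~: K ->
  free_set e (L :|: J) <->
  ((forall l j, l \in L -> j \in J -> ~~ e l j) \/
   (exists2 h, h \in J &
      L \subset nbhd e [set h] /\
      nbhd e (J :\ h) \subset nbhd e [set h] :\: L)).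
Proof.
move=> sg sLK sJI; split; first exact: (free_set_no_edge_or_hub sg sLK sJI).
case=> [no_edge | [h _ [sLh sJh]]] Y sY.
  exact: (trace_of_no_edges sg sLK sJI sY no_edge).
exact: (trace_of_hub sg sLK sJI sY sLh sJh).
Qed.
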